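(* Let $\mathcal{T}$ be a single-elimination tournament and $\mathcal{B}$ a set of brackets of $\mathcal{T}$. If there exist two distinct players $a,b$ such that $B_i(x_{a,b})\notin\{a,b\}$ for every $B_i\in\mathcal{B}$, then $\mathcal{B}$ is not $\sigma$-resolving for any scoring system $\sigma$.
   Context: A single-elimination tournament is a finite directed graph $\mathcal{T}$ such that: (a) $\mathcal{T}$ has exactly one sink (vertex with no out-neighbours); (b) every non-sink vertex has exactly one out-neighbour; (c) $\mathcal{T}$ has no directed cycles; (d) $|N^-(v)|\ne 1$ for every vertex $v$, where $N^-(v)$ denotes the set of in-neighbours of $v$. The players $P(\mathcal{T})$ are the sources and the matches are $M(\mathcal{T})=V(\mathcal{T})\setminus P(\mathcal{T})$. For a vertex $u$, $P(u)$ is the set of players $a$ for which there is a directed walk from $a$ to $u$ (length $0$ allowed). For distinct players $a,b$, $x_{a,b}$ denotes the unique match $x$ having in-neighbours $u_a,u_b\in N^-(x)$ with $P(u_a)\cap\{a,b\}=\{a\}$ and $P(u_b)\cap\{a,b\}=\{b\}$ (such a match exists and is unique). A bracket is a function $B:V(\mathcal{T})\to P(\mathcal{T})$ with $B(a)=a$ for every player $a$ and $B(x)\in\{B(u):u\in N^-(x)\}$ for every match $x$. A scoring system is any function $\sigma:M(\mathcal{T})\to\mathbb{R}_{>0}$. For brackets $B,B'$ let $\mathrm{score}_\sigma(B,B')=\sum_{x\in M(\mathcal{T}):\,B(x)=B'(x)}\sigma(x)$. A set of brackets $\mathcal{B}$ is $\sigma$-resolving if for every pair of distinct brackets $B\ne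 B'$ there is $B_i\in\mathcal{B}$ with $\mathrm{score}_\sigma(B_i,B)\ne\mathrm{score}_\sigma(B_i,B')$. *)

From HB Require Import structures.
From mathcomp Require Import all_boot all_order all_algebra.
From mathcomp Require Import reals.
Set Implicit Arguments. Unset Strict Implicit. Unset Printing Implicit Defensive.
Import Order.TTheory GRing.Theory Num.Theory.

Section Tournament.
Variables (V : finType) (e : rel V).

Definition is_sink (v : V) : bool := [forall w, ~~ e v w].

Definition is_SET : Prop :=
  [/\ #|[set v | is_sink v]| = 1%N,
      forall v, ~~ is_sink v -> #|[set w | e v w]| = 1%N,
      forall v, ~~ [exists w, e v w && connect e w v]
    & forall v, #|[set u | e u v]| != 1%N].

Definition is_player (v : V) : bool := [forall u, ~~ e u v].
Definition is_match (v : V) : bool := ~~ is_player v.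

Definition Pset (u : V) : {set V} := [set a | is_player a && connect e a u].

Definition is_xab (a b x : V) : bool :=
  is_match x &&
  [exists ua, exists ub,
     [&& e ua x, e ub x,
         Pset ua :&: [set a; b] == [set a] &
         Pset ub :&: [set a; b] == [set b]]].

Definition is_bracket (B : {ffun V -> V}) : Prop :=
  (forall a, is_player a -> B a = a) /\
  (forall x, is_match x -> exists2 u, e u x & B x = B u).

Definition score (R : numDomainType) (sigma : V -> R) (B B' : {ffun V -> V}) : R :=
  (\sum_(x | is_match x && (B x == B' x)) sigma x)%R.

Definition resolving (R : numDomainType) (sigma : V -> R)
  (Bs : {set {ffun V -> V}}) : Prop :=
  forall B B', is_bracket B -> is_bracket B' -> B != B' ->
    exists2 Bi, Bi \in Bs & score sigma Bi B != score sigma Bi B'.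

End Tournament.

From HB Require Import structures.
From mathcomp Require Import all_boot all_order all_algebra.
From mathcomp Require Import reals.
From mathcomp Require Import zify.
Import Order.TTheory GRing.Theory Num.Theory.
Set Implicit Arguments. Unset Strict Implicit.

(* Let x be the match x_{a,b}, fed by u_a (above a) and u_b (above b).  We
   build a bracket B in which a wins every match on a walk from a to u_a, and
   in which no match other than x takes its winner from x; then B x = a, and
   the bracket B' obtained by declaring b the winner of x alone is still a
   bracket.  B and B' differ only at x, where every B_i predicts neither a nor
   b, so score(B_i, B) = score(B_i, B') for every B_i and scoring system.
   Such brackets come from letting every match pick one entrant g v and
   following g down to a player: acyclicity makes this terminate, and since no
   in-degree is 1, every match other than x can avoid picking x. *)

Section Digraph.
Variables (V : finType) (e : rel V).

Lemma connect_last_edge u v :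
  connect e u v -> u != v -> exists2 w, connect e u w & e w v.
Proof.
case/connectP=> p; elim/last_ind: p => [|p y _] /=; first by move=> _ ->; rewrite eqxx.
rewrite rcons_path last_rcons => /andP[up ey] -> _.
by exists (last u p) => //; apply/connectP; exists p.
Qed.

Lemma connect_player u p : is_player e p -> connect e u p -> u = p.
Proof.
move=> /forallP pl up; apply/eqP/negPn/negP => /(connect_last_edge up)[w _ ewp].
by have := pl w; rewrite ewp.
Qed.

Lemma match_has_parent v : is_match e v -> exists u, e u v.
Proof. by rewrite /is_match negb_forall => /existsP[u /negPn]; exists u. Qed.

Definition between p u := [pred v | connect e p v && connect e v u].

Lemma between_parent p u v : is_player e p -> is_match e v -> v \in between p u ->
  exists2 w, e w v & w \in between p u.
Proof.
move=> pp vm /andP[pv vu]; have pnv : p != v by apply: contraNneq vm => <-.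
have [w pw ewv] := connect_last_edge pv pnv.
by exists w; rewrite // inE pw (connect_trans (connect1 ewv)).
Qed.

Lemma between_disjoint a ua b ub v : ~~ connect e b ua ->
  v \in between a ua -> v \notin between b ub.
Proof.
by move=> nbua /andP[_ vua]; apply: contraNN nbua => /andP[bv _]; apply: connect_trans vua.
Qed.

Lemma parent_choice (Q : V -> V -> bool) :
    (forall v, is_match e v -> exists2 u, e u v & Q v u) ->
  exists g : V -> V, (forall v, is_player e v -> g v = v) /\
    (forall v, is_match e v -> e (g v) v && Q v (g v)).
Proof.
move=> hQ; exists (fun v => if is_player e v then v
                            else odflt v [pick u | e u v && Q v u]).
split=> [v -> // | v vm]; rewrite (negbTE vm).
case: pickP => [u // | none]; have [u ? ?] := hQ v vm.
by have := none u; rewrite /= (_ : e u v) // (_ : Q v u).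
Qed.

Lemma score_eq_off (R : numDomainType) (sigma : V -> R) (Bi B B' : {ffun V -> V}) x :
    (forall v, v != x -> B v = B' v) -> Bi x != B x -> Bi x != B' x ->
  score e sigma Bi B = score e sigma Bi B'.
Proof.
move=> agree nB nB'; apply: eq_bigl => v.
have [-> | vx] := eqVneq v x; last by rewrite agree.
by rewrite (negbTE nB) (negbTE nB') !andbF.
Qed.

End Digraph.

Section Acyclic.
Variables (V : finType) (e : rel V).
Hypothesis acyclic : forall v, ~~ [exists w, e v w && connect e w v].

Lemma edge_not_connect u w : e u w -> ~~ connect e w u.
Proof.
by move=> euw; apply: contra (acyclic u) => wu; apply/existsP; exists w; rewrite euw.
Qed.

Lemma edge_neq u w : e u w -> u != w.
Proof. by move=> euw; apply: contraTneq (edge_not_connect euw) => ->; rewrite connect0. Qed.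

Lemma between_neq_child p u y v : e u y -> v \in between e p u -> v != y.
Proof. by move=> euy /andP[_ vu]; apply: contraTneq vu => ->; apply: edge_not_connect. Qed.

Definition ancestors v := [set w | connect e w v].

Lemma ancestors_proper u v : e u v -> ancestors u \proper ancestors v.
Proof.
move=> euv; apply/properP; split.
  by apply/subsetP => w; rewrite !inE => /connect_trans; apply; apply: connect1.
by exists v; rewrite !inE ?connect0 // edge_not_connect.
Qed.

Section Descend.
Variable g : V -> V.
Hypothesis g_player : forall v, is_player e v -> g v = v.
Hypothesis g_match : forall v, is_match e v -> e (g v) v.

Lemma iter_player k v : is_player e v -> iter k g v = v.
Proof. by move=> vp; elim: k => //= k ->; apply: g_player. Qed.

(* The number of ancestors is a ranking function for g. *)
Lemma iter_player_or_ancestors k v :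
  is_player e (iter k g v) || (#|ancestors (iter k g v)| + k <= #|ancestors v|).
Proof.
elim: k => [|k IH]; first by rewrite addn0 leqnn orbT.
have [wp | wm] := boolP (is_player e (iter k g v)).
  by rewrite iterS g_player ?wp.
have := proper_card (ancestors_proper (g_match wm)); move: IH; rewrite (negbTE wm) iterS.
lia.
Qed.

Definition descend v := iter #|V| g v.

Lemma descend_player v : is_player e (descend v).
Proof.
apply: contraT => np; have := iter_player_or_ancestors #|V| v.
have : 0 < #|ancestors (descend v)| by apply/card_gt0P; exists (descend v); rewrite inE.
rewrite -/(descend v) (negbTE np) /=; have := max_card (ancestors v).
move=> le_anc pos; rewrite -(prednK pos) addSn ltnNge.
by rewrite (leq_trans le_anc) ?leq_addl.
Qed.

Lemma descend_parent v : descend (g v) = descend v.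
Proof. by rewrite /descend -iterSr iterS g_player ?descend_player. Qed.

Lemma descend_between p u : is_player e p -> connect e p u ->
  (forall v, v \in between e p u -> g v \in between e p u) -> descend u = p.
Proof.
move=> pp pu closed; apply/esym/(connect_player (descend_player u)).
suff : descend u \in between e p u by case/andP.
by rewrite /descend; elim: #|V| => [|k IH]; [rewrite inE pu connect0 | exact: closed].
Qed.

Lemma bracket_descend : is_bracket e [ffun v => descend v].
Proof.
split=> [p pp | v vm]; first by rewrite ffunE /descend iter_player.
by exists (g v); rewrite ?g_match // !ffunE descend_parent.
Qed.

Lemma bracket_descend_reroute x y : (forall v, v != x -> g v != x) -> e y x ->
  is_bracket e [ffun v => if v == x then descend y else descend v].
Proof.
move=> g_avoid eyx; have yx := edge_neq eyx.
split=> [p pp | v vm]; rewrite ffunE.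
  have px : p != x by apply: contraTneq pp => ->; apply/forallPn; exists y; rewrite negbK.
  by rewrite (negbTE px) /descend iter_player.
have [-> | vx] := eqVneq v x; first by exists y; rewrite // ffunE (negbTE yx).
by exists (g v); rewrite ?g_match // ffunE (negbTE (g_avoid _ vx)) descend_parent.
Qed.

End Descend.

Section SplitBrackets.
Hypothesis indeg_neq1 : forall v, #|[set u | e u v]| != 1.

Lemma match_parent_avoid v y : is_match e v -> exists2 u, e u v & u != y.
Proof.
move=> /match_has_parent[u0 eu0]; apply/exists_inP; apply: contraR (indeg_neq1 v).
move=> /exists_inPn none; rewrite (_ : [set u | e u v] = [set y]) ?cards1 //.
apply/setP => u; rewrite !inE; apply/idP/eqP => [euv | ->]; first exact/eqP/negPn/none.
by have := none u0 eu0; rewrite negbK => /eqP <-.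
Qed.

Variables (a b x ua ub : V).
Hypotheses (a_player : is_player e a) (b_player : is_player e b).
Hypotheses (ua_x : e ua x) (ub_x : e ub x).
Hypotheses (a_ua : connect e a ua) (b_ub : connect e b ub) (b_n_ua : ~~ connect e b ua).

Lemma exists_split_choice : exists g : V -> V,
  [/\ forall v, is_player e v -> g v = v, forall v, is_match e v -> e (g v) v, g x = ua
    & forall v, v != x -> [&& g v != x,
        (v \in between e a ua) ==> (g v \in between e a ua)
      & (v \in between e b ub) ==> (g v \in between e b ub)]].
Proof.
pose keeps v u := [&& u != x, (v \in between e a ua) ==> (u \in between e a ua)
                            & (v \in between e b ub) ==> (u \in between e b ub)].
have [|g [g_player g_match]] :=
  @parent_choice _ e (fun v u => if v == x then u == ua else keeps v u).
  move=> v vm; have [-> | vx] := eqVneq v x; first by exists ua.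
  have [vA | nA] := boolP (v \in between e a ua).
    have [w ewv wA] := between_parent a_player vm vA.
    have nB := between_disjoint ub b_n_ua vA.
    by exists w; rewrite // /keeps (between_neq_child ua_x wA) wA (negbTE nB) implybT.
  have [vB | nB] := boolP (v \in between e b ub).
    have [w ewv wB] := between_parent b_player vm vB.
    by exists w; rewrite // /keeps (between_neq_child ub_x wB) wB (negbTE nA) implybT.
  have [w ewv wx] := match_parent_avoid x vm.
  by exists w; rewrite // /keeps wx (negbTE nA) (negbTE nB).
have xm : is_match e x by apply/forallPn; exists ua; rewrite negbK.
exists g; split=> [//|v /g_match/andP[] //||v vx].
  by have /andP[_] := g_match x xm; rewrite eqxx => /eqP.
have [vp | vm] := boolP (is_player e v); first by rewrite g_player // vx !implybb.
by have /andP[_] := g_match v vm; rewrite (negbTE vx).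
Qed.

Lemma exists_split_brackets : exists B B' : {ffun V -> V},
  [/\ is_bracket e B, is_bracket e B', B x = a, B' x = b
    & forall v, v != x -> B v = B' v].
Proof.
have [g [g_player g_match g_x keeps]] := exists_split_choice.
have B_ua : descend g ua = a.
  apply: descend_between => // v vA.
  by have /and3P[_ /implyP-> //] := keeps v (between_neq_child ua_x vA).
have B_ub : descend g ub = b.
  apply: descend_between => // v vB.
  by have /and3P[_ _ /implyP-> //] := keeps v (between_neq_child ub_x vB).
exists [ffun v => descend g v], [ffun v => if v == x then descend g ub else descend g v].
split=> [||||v vx]; rewrite ?ffunE ?eqxx ?(negbTE vx) //.
- exact: bracket_descend.
- by apply: bracket_descend_reroute => // v /keeps/and3P[].
- by rewrite -descend_parent // g_x.
Qed.

End SplitBrackets.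

End Acyclic.

Lemma xab_parents (V : finType) (e : rel V) a b x :
    is_player e b -> a != b -> is_xab e a b x ->
  exists ua ub, [/\ e ua x, e ub x, connect e a ua, connect e b ub & ~~ connect e b ua].
Proof.
move=> pb ab /andP[_ /existsP[ua /existsP[ub /and4P[ua_x ub_x /eqP/setP hA /eqP/setP hB]]]].
exists ua, ub; split=> //.
- by have := hA a; rewrite !inE !eqxx andbT => /andP[].
- by have := hB b; rewrite !inE !eqxx orbT andbT => /andP[].
- by have := hA b; rewrite !inE eqxx pb orbT andbT eq_sym (negbTE ab) /= => ->.
Qed.

Theorem proposition4p3 (V : finType) (e : rel V) (Bs : {set {ffun V -> V}})
  (a b : V) :
  is_SET e ->
  (forall B, B \in Bs -> is_bracket e B) ->
  is_player e a -> is_player e b -> a != b ->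
  (exists x, is_xab e a b x /\ forall Bi, Bi \in Bs -> Bi x \notin [set a; b]) ->
  forall (R : realType) (sigma : V -> R),
    (forall x, is_match e x -> (0 < sigma x)%R) ->
    ~ resolving e sigma Bs.
Proof.
case=> _ _ acyclic indeg_neq1 _ pa pb ab [x [xab avoid]] R sigma _ resolves.
have [ua [ub [ua_x ub_x a_ua b_ub b_n_ua]]] := xab_parents pb ab xab.
have [B [B' [brB brB' Bx B'x agree]]] :=
  exists_split_brackets acyclic indeg_neq1 pa pb ua_x ub_x a_ua b_ub b_n_ua.
have neqBB' : B != B' by apply: contraNneq ab => eqBB'; rewrite -Bx -B'x eqBB'.
have [Bi Bi_in] := resolves B B' brB brB' neqBB'; apply/negP/negPn/eqP.
have := avoid Bi Bi_in; rewrite !inE negb_or -Bx -B'x => /andP[nBx nB'x].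
exact: score_eq_off agree nBx nB'x.
Qed.
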